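(* If $R$ is an affine ternary relation and $\sigma$ is a permutation of $\mathcal M$ preserving $R$, then $\sigma\in AGL(\mathcal M)$.
   Context: $\mathcal M$ denotes the $\mathbb Q$-vector space $\mathbb Q^{<\omega}$ of all sequences of rationals with only finitely many nonzero terms, with zero vector $\vec 0$. A relation is definable if it is first-order definable without parameters in $\langle\mathcal M;+\rangle$. A permutation $\sigma$ preserves a ternary relation $R$ if $R(a,b,c)\iff R(\sigma a,\sigma b,\sigma c)$ for all $a,b,c$. $AGL(\mathcal M)$ is the group of maps $x\mapsto A x+v$ with $A$ an invertible $\mathbb Q$-linear map of $\mathcal M$ and $v\in\mathcal M$. A ternary relation $R(x,y,z)$ has table $T$, where $T\subset\mathbb Q^2$ is finite, if for all linearly independent $x,y$ and all $z$: $R(x,y,z)\iff z=px+qy$ for some $(p,q)\in T$. A definable ternary relation $R$ is affine if it has a nonempty table $T$ such that every $(p,q)\in T$ satisfies $p\ne0$, $q\ne0$, $p+q=1$, and moreover for all $x,y,z\in\mathcal M$: if $x\ne y$ and $R(x,y,z)$ then $z\in\{x+t(y-x):t\in\mathbb Q\}$, and if $R(x,x,z)$ then $z=x$. *)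

From HB Require Import structures.
From mathcomp Require Import all_boot all_order all_algebra.
Set Implicit Arguments. Unset Strict Implicit. Unset Printing Implicit Defensive.
Import Order.TTheory GRing.Theory Num.Theory.
Local Open Scope ring_scope.

(* The Q-vector space M = Q^{<omega} of finitely supported rational sequences,
   represented by {poly rat}: a polynomial is exactly its finitely supported
   coefficient sequence; only its additive group and Q-scaling are used. *)
Notation M := {poly rat}.

Inductive term : Type :=
| TVar : nat -> term
| TPlus : term -> term -> term.

Inductive formula : Type :=
| FEq : term -> term -> formula
| FNot : formula -> formula
| FAnd : formula -> formula -> formula
| FOr : formula -> formula -> formula
| FImp : formula -> formula -> formula
| FEx : nat -> formula -> formula
| FAll : nat -> formula -> formula.

Fixpoint teval (e : nat -> M) (t : term) : M :=
  match t with
  | TVar i => e i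
  | TPlus t1 t2 => teval e t1 + teval e t2
  end.

Definition upd (e : nat -> M) (i : nat) (x : M) : nat -> M :=
  fun j => if j == i then x else e j.

Fixpoint sat (e : nat -> M) (f : formula) : Prop :=
  match f with
  | FEq t1 t2 => teval e t1 = teval e t2
  | FNot g => ~ sat e g
  | FAnd g h => sat e g /\ sat e h
  | FOr g h => sat e g \/ sat e h
  | FImp g h => sat e g -> sat e h
  | FEx i g => exists x : M, sat (upd e i x) g
  | FAll i g => forall x : M, sat (upd e i x) g
  end.

Definition definable3 (R : M -> M -> M -> Prop) : Prop :=
  exists phi : formula, forall e : nat -> M, sat e phi <-> R (e 0%N) (e 1%N) (e 2%N).

Definition lin_indep2 (x y : M) : Prop :=
  forall a b : rat, a *: x + b *: y = 0 -> a = 0 /\ b = 0.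

Definition has_table (R : M -> M -> M -> Prop) (T : seq (rat * rat)) : Prop :=
  forall x y : M, lin_indep2 x y -> forall z : M,
    R x y z <-> exists2 pq, pq \in T & z = pq.1 *: x + pq.2 *: y.

Definition affine_rel (R : M -> M -> M -> Prop) : Prop :=
  definable3 R /\
  (exists T : seq (rat * rat),
      T != [::] /\ has_table R T /\
      (forall pq, pq \in T -> [/\ pq.1 != 0, pq.2 != 0 & pq.1 + pq.2 = 1])) /\
  (forall x y z : M, x <> y -> R x y z -> exists t : rat, z = x + t *: (y - x)) /\
  (forall x z : M, R x x z -> z = x).

Definition preserves (sigma : M -> M) (R : M -> M -> M -> Prop) : Prop :=
  forall a b c : M, R a b c <-> R (sigma a) (sigma b) (sigma c).

Definition in_AGL (sigma : M -> M) : Prop :=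
  exists (A : M -> M) (v : M),
    (forall (a : rat) (x y : M), A (a *: x + y) = a *: A x + A y) /\
    bijective A /\
    (forall x : M, sigma x = A x + v).

From mathcomp Require Import all_boot all_order all_algebra ring lra zify.
From Stdlib Require Import Classical.
Set Implicit Arguments. Unset Strict Implicit. Unset Printing Implicit Defensive.
Import Order.TTheory GRing.Theory Num.Theory.
Local Open Scope ring_scope.

(* Write [q] for the second coordinate of an entry of the table.  For linearly
   independent [x], [y], the parameters [t] for which [sigma (x + t (y - x))] lies on
   the line through [sigma x] and [sigma y] are closed under [s, t |-> (1 - q) s + q t]
   and its two partial inverses, so they form all of [Q]: [sigma] maps such lines into
   lines, and so does its inverse.  Since a parallelogram is determined by the common
   midpoint of its diagonals, [sigma (x + y - z) = sigma x + sigma y - sigma z] whenever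
   enough of the points involved are independent.  The degenerate configurations are
   bypassed through auxiliary vertices [X^n] of large degree: only finitely many of them
   are bad, because the image of an affine plane missing [0] never fits in a line
   through [0].  Hence [sigma (g + x) - sigma g] does not depend on the base point [g]
   and is additive, thus [Q]-linear; [sigma] is this map plus a translation, the points
   [0] and [sigma^-1 0] being checked separately. *)

(* [ring] does not handle module scalings: turn [a *: p] into [a%:P * p]. *)
Ltac poly_ring :=
  rewrite -?mul_polyC ?(polyCD, polyCB, polyCM, polyCN, polyC1, polyC0); ring.

Definition on_line (x y z : M) := exists t : rat, z = x + t *: (y - x).

Definition lin_indep3 (x y z : M) := forall a b c : rat,
  a *: x + b *: y + c *: z = 0 -> [/\ a = 0, b = 0 & c = 0].

Definition in_span1 (w x : M) := exists l : rat, x = l *: w.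

Lemma on_line_l x y : on_line x y x.
Proof. by exists 0; rewrite scale0r addr0. Qed.

Lemma on_line_r x y : on_line x y y.
Proof. by exists 1; rewrite scale1r addrC subrK. Qed.

Lemma on_line_trans x y p z w :
  on_line x y p -> on_line x y z -> on_line p z w -> on_line x y w.
Proof. by case=> a ->; case=> b ->; case=> c ->; exists (a + c * (b - a)); poly_ring. Qed.

Lemma on_line_swap p w z : on_line p w z -> z <> p -> on_line p z w.
Proof.
case=> t ->; have [->|t0 _] := eqVneq t 0; first by rewrite scale0r addr0.
exists t^-1; rewrite addrAC subrr add0r scalerA mulVf // scale1r.
by rewrite addrC subrK.
Qed.

Lemma on_lineC p w z : on_line p w z -> on_line w p z.
Proof. by case=> t ->; exists (1 - t); poly_ring. Qed.

Lemma lin_indep2_neq x y : lin_indep2 x y -> x <> y.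
Proof.
move=> H E; subst y; have := H 1 (-1); rewrite scaleN1r scale1r subrr.
by case=> // /eqP; rewrite oner_eq0.
Qed.

Lemma lin_indep2_neq0 x y : lin_indep2 x y -> x <> 0.
Proof.
move=> H E; subst x; have := H 1 0; rewrite scaler0 scale0r addr0.
by case=> // /eqP; rewrite oner_eq0.
Qed.

Lemma lin_indep2C x y : lin_indep2 x y -> lin_indep2 y x.
Proof. by move=> H a b E; have [] := H b a; [rewrite addrC | move=> -> ->]. Qed.

Lemma lin_indep2_line_pts x y s t : lin_indep2 x y -> s != t ->
  lin_indep2 (x + s *: (y - x)) (x + t *: (y - x)).
Proof.
move=> H st a b E.
have [h1 h2] : a + b - a * s - b * t = 0 /\ a * s + b * t = 0.
  by apply: H; rewrite -E; poly_ring.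
have hb : b = - a by lra.
have /eqP : a * (s - t) = 0 by rewrite -h2 hb; ring.
rewrite mulf_eq0 subr_eq0 (negbTE st) orbF => /eqP a0.
by rewrite hb a0 oppr0.
Qed.

Lemma line_pt_inj x y s t :
  lin_indep2 x y -> x + s *: (y - x) = x + t *: (y - x) -> s = t.
Proof.
move=> H /addrI /eqP; rewrite -subr_eq0 -scalerBl scaler_eq0 !subr_eq0.
by case/orP=> [/eqP //|/eqP yx]; case: (lin_indep2_neq H).
Qed.

Lemma line_pt_neq0 x y t : lin_indep2 x y -> x + t *: (y - x) != 0.
Proof.
move=> H; apply/eqP => E.
have [h1 h2] : 1 - t = 0 /\ t = 0 by apply: H; rewrite -E; poly_ring.
by move: h1; rewrite h2 subr0 => /eqP; rewrite oner_eq0.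
Qed.

Lemma lin_indep2_span1 w x y :
  ~ in_span1 w x -> in_span1 w y -> y <> 0 -> lin_indep2 x y.
Proof.
move=> nx [l ->] y0 a b E.
have l0 : l != 0 by apply: contra_notN y0 => /eqP ->; rewrite scale0r.
have [a0|a0] := eqVneq a 0.
  move: E; rewrite a0 scale0r add0r scalerA => /eqP; rewrite scaler_eq0 mulf_eq0.
  rewrite (negbTE l0) orbF => /orP[/eqP->//|/eqP w0].
  by case: y0; rewrite w0 scaler0.
case: nx; exists (- (b * l) / a).
apply: (@scalerI _ _ a) => //; rewrite scalerA mulrC divfK //.
by rewrite scaleNr -scalerA; apply/eqP; rewrite -addr_eq0 E.
Qed.

Lemma in_span1_on_line w x y z :
  in_span1 w x -> in_span1 w y -> on_line x y z -> in_span1 w z.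
Proof. by case=> a ->; case=> b ->; case=> k ->; exists (a + k * (b - a)); poly_ring. Qed.

Lemma in_span1_not_lin_indep2 x y : x <> 0 -> ~ lin_indep2 x y -> in_span1 x y.
Proof.
move=> x0 nI; apply: NNPP => nS; apply: nI => a b E.
have [b0|b0] := eqVneq b 0.
  by move: E; rewrite b0 scale0r addr0 => /eqP; rewrite scaler_eq0 => /orP[/eqP|/eqP].
case: nS; exists (- a / b).
apply: (@scalerI _ _ b) => //; rewrite scalerA mulrC divfK // scaleNr.
by apply/eqP; rewrite -addr_eq0 addrC E.
Qed.

Lemma exists_notin_span1 w : exists v, ~ in_span1 w v.
Proof.
exists 'X^(size w); case=> l E.
by have := size_scale_leq l w; rewrite -E size_polyXn ltnn.
Qed.

Lemma lin_indep3_12 x y z : lin_indep3 x y z -> lin_indep2 x y.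
Proof. by move=> H a b E; have [] // := H a b 0; rewrite scale0r addr0. Qed.

Lemma lin_indep3_13 x y z : lin_indep3 x y z -> lin_indep2 x z.
Proof. by move=> H a b E; have [] // := H a 0 b; rewrite scale0r addr0. Qed.

Lemma lin_indep3_213 x y z : lin_indep3 x y z -> lin_indep3 y x z.
Proof. by move=> H a b c E; have [] // := H b a c; rewrite (addrC (b *: x)). Qed.

Lemma lin_indep3_312 x y z : lin_indep3 x y z -> lin_indep3 z x y.
Proof. by move=> H a b c E; have [] // := H b c a; rewrite -E; poly_ring. Qed.

Lemma lin_indep3_neq x y z : lin_indep3 x y z -> [/\ x <> y, x <> z & y <> z].
Proof.
move=> H; split.
- exact: lin_indep2_neq (lin_indep3_12 H).
- exact: lin_indep2_neq (lin_indep3_13 H).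
- exact: lin_indep2_neq (lin_indep3_12 (lin_indep3_312 (lin_indep3_312 H))).
Qed.

Lemma lin_indep3_opposite x y z : lin_indep3 x y z -> lin_indep2 z (x + y - z).
Proof.
move=> H a b E; have [h1 h2 h3] : [/\ b = 0, b = 0 & a - b = 0].
  by apply: H; rewrite -E; poly_ring.
by move: h3; rewrite h1 subr0.
Qed.

Lemma lin_indep3_fourth_vertex x y z : lin_indep3 x y z -> lin_indep3 x y (x + y - z).
Proof.
move=> H a b c E; have [] : [/\ a + c = 0, b + c = 0 & - c = 0].
  by apply: H; rewrite -E; poly_ring.
by move=> h1 h2 h3; split; lra.
Qed.

Lemma lin_indep3_diag_side x y z w :
  lin_indep3 x y z -> on_line z x w -> ~ on_line y (x + y - z) w.
Proof.
move=> H [s ->]; case=> r E.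
have [_ m1 _] : [/\ s - r = 0, -1 = 0 :> rat & 1 - s + r = 0].
  apply: H; transitivity ((z + s *: (x - z)) - (y + r *: (x + y - z - y))).
    by poly_ring.
  by rewrite E subrr.
by move/eqP: m1; rewrite oppr_eq0 oner_eq0.
Qed.

Lemma scale2_midpoint (x y : M) : 2 *: (x + 2^-1 *: (y - x)) = x + y.
Proof. by rewrite scalerDr scalerA mulfV // scale1r; poly_ring. Qed.

Definition plane_pt (a b c : M) (s t : rat) := a + s *: (b - a) + t *: (c - a).

Lemma lin_indep2_plane_pts a b c s1 t1 s2 t2 : lin_indep3 a b c ->
  (s1 != s2) || (t1 != t2) -> lin_indep2 (plane_pt a b c s1 t1) (plane_pt a b c s2 t2).
Proof.
move=> H st al be E.
have [h1 h2 h3] : [/\ al * (1 - s1 - t1) + be * (1 - s2 - t2) = 0,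
    al * s1 + be * s2 = 0 & al * t1 + be * t2 = 0].
  by apply: H; rewrite -E /plane_pt; poly_ring.
have hb : be = - al by lra.
have al0 : al = 0.
  case/orP: st => /negPf st.
    have /eqP : al * (s1 - s2) = 0 by rewrite -h2 hb; ring.
    by rewrite mulf_eq0 subr_eq0 st orbF => /eqP.
  have /eqP : al * (t1 - t2) = 0 by rewrite -h3 hb; ring.
  by rewrite mulf_eq0 subr_eq0 st orbF => /eqP.
by rewrite hb al0 oppr0.
Qed.

Lemma lin_indep3_shift a b c v : lin_indep3 a b c ->
  (forall s t, v <> plane_pt a b c s t) -> lin_indep3 (a - v) (b - v) (c - v).
Proof.
move=> H nv al be ga E.
have [S0|S0] := eqVneq (al + be + ga) 0.
  apply: H; transitivity (al *: (a - v) + be *: (b - v) + ga *: (c - v)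
      + (al + be + ga) *: v); first by poly_ring.
  by rewrite E S0 scale0r addr0.
case: (nv (be / (al + be + ga)) (ga / (al + be + ga))).
apply: (@scalerI _ _ (al + be + ga)) => //.
rewrite /plane_pt !scalerDr !scalerA !(mulrC (al + be + ga)) !divfK //.
transitivity ((al + be + ga) *: v + (al *: (a - v) + be *: (b - v) + ga *: (c - v))).
  by rewrite E addr0.
by poly_ring.
Qed.

Lemma lin_indep3_fresh (f s : M) (k : rat) N i j :
  f != 0 -> (size f <= N)%N -> (size s <= N)%N -> k != 0 -> i != j ->
  lin_indep3 f (s + k *: 'X^(N + i)) (s + k *: 'X^(N + j)).
Proof.
move=> f0 hf hs k0 ij al be ga E.
have coef_fresh l : (N <= l)%N -> (f`_l = 0) * (s`_l = 0).
  by move=> hl; split; apply: nth_default; apply: leq_trans hl.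
have ci := congr1 (fun p : M => p`_(N + i)) E.
have cj := congr1 (fun p : M => p`_(N + j)) E.
move: ci cj; rewrite !coefE !coef_fresh ?leq_addr // !eqxx !eqn_add2l (negbTE ij).
rewrite eq_sym (negbTE ij) !mulr0 !addr0 !add0r !mulr1 => /eqP ci /eqP cj.
move: ci cj; rewrite !mulf_eq0 (negbTE k0) !orbF => /eqP be0 /eqP ga0.
move: E; rewrite be0 ga0 !scale0r !addr0 => /eqP; rewrite scaler_eq0 (negbTE f0) orbF.
by move/eqP.
Qed.

Lemma lin_indep3_addX (a b : M) n : lin_indep2 a b ->
  (size a <= n)%N -> (size b <= n)%N -> lin_indep3 a b 'X^n.
Proof.
move=> H ha hb al be ga E.
have := congr1 (fun p : M => p`_n) E.
rewrite !coefE eqxx !(nth_default 0 ha) !(nth_default 0 hb) !mulr0 !add0r mulr1 => g0.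
by move: E; rewrite g0 scale0r addr0 => /H [-> ->].
Qed.

Lemma lin_indep3_subX (s c : M) n : lin_indep2 s c ->
  (size s <= n)%N -> (size c <= n)%N -> lin_indep3 (s - 'X^n) 'X^n c.
Proof.
move=> H hs hc al be ga E.
have := congr1 (fun p : M => p`_n) E.
rewrite !coefE eqxx !(nth_default 0 hs) !(nth_default 0 hc) !mulr0 !addr0 !mulr1.
rewrite sub0r mulrN1 => cn.
have eb : be = al by apply/eqP; rewrite -subr_eq0 -cn; apply/eqP; ring.
have [a0 g0] : al = 0 /\ ga = 0 by apply: H; rewrite -E eb; poly_ring.
by rewrite eb.
Qed.

Lemma lin_indep2_addX (s u : M) n : (size s <= n)%N -> (size u <= n)%N -> u != 0 ->
  lin_indep2 (s + 'X^n) u.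
Proof.
move=> hs hu u0 al be E.
have := congr1 (fun p : M => p`_n) E.
rewrite !coefE eqxx !(nth_default 0 hs) !(nth_default 0 hu) !mulr0 !add0r mulr1 addr0.
move=> al0; move: E; rewrite al0 scale0r add0r => /eqP; rewrite scaler_eq0 (negbTE u0) orbF.
by move/eqP.
Qed.

Lemma lin_indep2_addX_X (s : M) n : (size s <= n)%N -> s != 0 ->
  lin_indep2 (s + 'X^n) 'X^n.
Proof.
move=> hs s0 al be E.
have := congr1 (fun p : M => p`_n) E.
rewrite !coefE eqxx !(nth_default 0 hs) !mulr1 => cn.
have eb : be = - al by apply/eqP; rewrite -addr_eq0 addrC cn.
move: E; rewrite eb scaleNr scalerDr addrK => /eqP; rewrite scaler_eq0 (negbTE s0) orbF.
by move/eqP => ->; rewrite oppr0.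
Qed.

Lemma addX_neq0 (s : M) n : (size s <= n)%N -> s + 'X^n != 0.
Proof.
move=> hs; apply/eqP => /(congr1 (fun p : M => p`_n)) /eqP.
by rewrite coefD coefXn eqxx (nth_default 0 hs) add0r coef0 oner_eq0.
Qed.

Lemma expX_inj : injective (fun n => 'X^n : M).
Proof. by move=> m n e; have := congr1 (fun p : M => size p) e; rewrite !size_polyXn => -[]. Qed.

Definition eventually (P : nat -> Prop) := exists N, forall i, (N <= i)%N -> P i.

Lemma eventually_and (P Q : nat -> Prop) :
  eventually P -> eventually Q -> eventually (fun i => P i /\ Q i).
Proof.
case=> m hm [n hn]; exists (maxn m n) => i; rewrite geq_max => /andP[hmi hni].
by split; [apply: hm | apply: hn].
Qed.

Lemma eventually_not_unique (B : nat -> Prop) :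
  (forall i j, B i -> B j -> i = j) -> eventually (fun i => ~ B i).
Proof.
move=> uB; have [[i0 Bi0]|nB] := classic (exists i, B i).
  by exists i0.+1 => i hi Bi; move: hi; rewrite (uB _ _ Bi Bi0) ltnn.
by exists 0%N => i _ Bi; apply: nB; exists i.
Qed.

Lemma additive_linear (U V : lmodType rat) (f : U -> V) : {morph f : x y / x + y} ->
  forall (a : rat) x y, f (a *: x + y) = a *: f x + f y.
Proof.
move=> fD a x y.
have f0 : f 0 = 0 by apply: (@addrI _ (f 0)); rewrite -fD !addr0.
have fN : forall x, f (- x) = - f x.
  by move=> z; apply: (@addrI _ (f z)); rewrite -fD !subrr.
have fMn : forall x n, f (x *+ n) = f x *+ n.
  by move=> z; elim=> [|n IH]; rewrite ?mulr0n // !mulrS fD IH.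
have fZ : forall (z : int) x, f (z%:~R *: x) = z%:~R *: f x.
  by move=> z w; rewrite !scaler_int; case: z => n; rewrite /intmul ?fN fMn.
rewrite fD; congr (_ + _).
have d0 : ((denq a)%:~R : rat) != 0 by rewrite intr_eq0 denq_neq0.
apply: (@scalerI _ _ (denq a)%:~R) => //.
by rewrite -fZ !scalerA (mulrC _ a) -numqE fZ.
Qed.

Section LineImage.

Variables (R : M -> M -> M -> Prop) (q : rat) (tau : M -> M).
Hypothesis q_neq0 : q != 0.
Hypothesis q_neq1 : q != 1.
Hypothesis R_table : forall x y, lin_indep2 x y -> R x y (x + q *: (y - x)).
Hypothesis R_on_line : forall x y z, x <> y -> R x y z -> on_line x y z.
Hypothesis tau_inj : injective tau.
Hypothesis tau_R : forall a b c, R a b c -> R (tau a) (tau b) (tau c).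

Section OneLine.

Variables x y : M.
Hypothesis xy : lin_indep2 x y.

Let p t := x + t *: (y - x).
Let mix s t := (1 - q) * s + q * t.
Let S t := on_line (tau x) (tau y) (tau (p t)).

Let tau_p_inj s t : tau (p s) = tau (p t) -> s = t.
Proof. by move/tau_inj/(line_pt_inj xy). Qed.

Let image_mix s t : s != t -> on_line (tau (p s)) (tau (p t)) (tau (p (mix s t))).
Proof.
move=> st; apply: R_on_line; first by move/tau_p_inj/eqP; rewrite (negbTE st).
apply: tau_R; have := R_table (lin_indep2_line_pts xy st).
by congr R; rewrite /p /mix; poly_ring.
Qed.

Let S_mix s t : S s -> S t -> S (mix s t).
Proof.
have [-> _ St|st Ss St] := eqVneq s t; first by rewrite /mix mulrBl mul1r subrK.
exact: on_line_trans Ss St (image_mix st).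
Qed.

Let S_mix_r s t : s != t -> S s -> S (mix s t) -> S t.
Proof.
move=> st Ss Su; apply: on_line_trans Ss Su (on_line_swap (image_mix st) _).
move/tau_p_inj/eqP; rewrite /mix -subr_eq0; apply/negP.
have -> : (1 - q) * s + q * t - s = q * (t - s) by ring.
by rewrite mulf_neq0 // subr_eq0 eq_sym.
Qed.

Let S_mix_l s t : s != t -> S t -> S (mix s t) -> S s.
Proof.
move=> st St Su.
apply: on_line_trans St Su (on_line_swap (on_lineC (image_mix st)) _).
move/tau_p_inj/eqP; rewrite /mix -subr_eq0; apply/negP.
have -> : (1 - q) * s + q * t - t = (1 - q) * (s - t) by ring.
by rewrite mulf_neq0 // subr_eq0 ?st // eq_sym.
Qed.

Let S0 : S 0.
Proof. by rewrite /S /p scale0r addr0; apply: on_line_l. Qed.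

Let S1 : S 1.
Proof. by rewrite /S /p scale1r addrC subrK; apply: on_line_r. Qed.

Let S_divq z : S z -> S (z / q).
Proof.
have [->|z0 Sz] := eqVneq z 0; first by rewrite mul0r.
apply: (S_mix_r _ S0); first by rewrite eq_sym mulf_neq0 ?invr_eq0.
by rewrite /mix mulr0 add0r mulrC divfK.
Qed.

Let S_div1q z : S z -> S (z / (1 - q)).
Proof.
have q1 : 1 - q != 0 by rewrite subr_eq0 eq_sym.
have [->|z0 Sz] := eqVneq z 0; first by rewrite mul0r.
apply: (S_mix_l _ S0); first by rewrite mulf_neq0 ?invr_eq0.
by rewrite /mix mulr0 addr0 mulrC divfK.
Qed.

Let S_add a b : S a -> S b -> S (a + b).
Proof.
move=> Sa Sb; have q1 : 1 - q != 0 by rewrite subr_eq0 eq_sym.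
have -> : a + b = mix (a / (1 - q)) (b / q) by rewrite /mix [(1 - q) * _]mulrC [q * _]mulrC !divfK.
exact: S_mix (S_div1q Sa) (S_divq Sb).
Qed.

Let S_opp a : S a -> S (- a).
Proof.
have q1 : 1 - q != 0 by rewrite subr_eq0 eq_sym.
have [->|a0 Sa] := eqVneq a 0; first by rewrite oppr0.
have Ss : S (- (q * a) / (1 - q)).
  apply: (S_mix_l _ Sa); last by rewrite /mix mulrC divfK // addrC subrr.
  apply: contra_neq a0 => e.
  have : (1 - q) * a = - (q * a) by rewrite -{1}e mulrC divfK.
  by move=> h; nra.
have -> : - a = (1 - q) * (- (q * a) / (1 - q)) / q by field; apply/andP.
by apply: S_divq; have := S_mix Ss S0; rewrite /mix mulr0 addr0.
Qed.

Lemma line_image_int (m : int) : on_line (tau x) (tau y) (tau (x + m%:~R *: (y - x))).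
Proof.
have S_nat n : S n%:R by elim: n => [|n IH]; [exact: S0 | rewrite -addn1 natrD; exact: S_add IH S1].
by case: m => n; rewrite ?NegzE; [apply: S_nat | rewrite ?rmorphN /=; apply: S_opp; apply: S_nat].
Qed.

End OneLine.

Lemma line_image x y t : lin_indep2 x y ->
  on_line (tau x) (tau y) (tau (x + t *: (y - x))).
Proof.
move=> xy; have [->|t0] := eqVneq t 0; first by rewrite scale0r addr0; apply: on_line_l.
set c := x + t *: (y - x).
have xc : lin_indep2 x c.
  by have := @lin_indep2_line_pts x y 0 t xy; rewrite eq_sym scale0r addr0; apply.
(* [c] is the [denq t]-th point of the line [x, c] and the [numq t]-th point of [x, y]. *)
have e : x + (denq t)%:~R *: (c - x) = x + (numq t)%:~R *: (y - x).
  rewrite /c [x + _ - x]addrAC subrr add0r scalerA; congr (_ + _ *: _).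
  by rewrite -{2}(divq_num_den t) mulrC divfK // intr_eq0 denq_neq0.
have num_ne : tau (x + (numq t)%:~R *: (y - x)) <> tau x.
  move/tau_inj => ex; have := line_pt_inj xy (s := (numq t)%:~R) (t := 0).
  rewrite scale0r addr0 => /(_ ex) /eqP; rewrite intr_eq0 numq_eq0; exact/negP.
have := on_line_swap (line_image_int xc (denq t)); rewrite e => /(_ num_ne).
exact: on_line_trans (on_line_l _ _) (line_image_int xy (numq t)).
Qed.

End LineImage.

Lemma affine_indep_on_lines v a b c p p' : lin_indep3 (a - v) (b - v) (c - v) ->
  on_line v a p' -> on_line b p' p -> on_line v c p -> p = v.
Proof.
move=> H [m ->] [l ->] [r e].
have [_ _ /eqP] : [/\ l * m = 0, 1 - l = 0 & - r = 0].
  by apply: H; transitivity ((b + l *: (v + m *: (a - v) - b)) - (v + r *: (c - v)));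
    [poly_ring | rewrite e subrr].
by rewrite e oppr_eq0 => /eqP ->; rewrite scale0r addr0.
Qed.

Lemma exists_transversal w v A B C : ~ in_span1 w v ->
  in_span1 w A -> in_span1 w B -> in_span1 w C -> A <> B -> A <> C ->
  exists r s mu : rat, [/\ r != 0, ~ in_span1 w (v + mu *: (A - v)) &
    v + r *: (C - v) = B + s *: (v + mu *: (A - v) - B)].
Proof.
move=> nv [al ->] [be ->] [ga ->] AB AC.
have alb : al != be by apply: contra_notN AB => /eqP ->.
have gal : ga - al != 0 by rewrite subr_eq0; apply: contra_notN AC => /eqP ->.
pose den r := (al - be) + r * (ga - al).
(* [den] vanishes for at most one value of [r]. *)
pose r : rat := if den 2 == 0 then 3 else 2.
have dr : den r != 0.
  rewrite /r; case: ifP => [/eqP d2|/negbT //]; apply: contraNneq gal => d3.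
  have -> : ga - al = den 3 - den 2 by rewrite /den; ring.
  by rewrite d2 d3 subrr.
have r0 : r != 0 by rewrite /r; case: ifP.
have r1 : 1 - r != 0 by rewrite /r; case: ifP.
pose la := (al - be) / den r.
have la0 : la != 0 by rewrite /la mulf_eq0 negb_or invr_eq0 dr subr_eq0 alb.
have lad : la * den r = al - be by rewrite /la divfK.
pose mu := 1 - la * (1 - r).
have eV' : v + mu *: (al *: w - v) = be *: w + la *: (v + r *: (ga *: w - v) - be *: w).
  transitivity (be *: w + la *: (v + r *: (ga *: w - v) - be *: w)
    + (al - be - la * den r) *: w); first by rewrite /mu /den; poly_ring.
  by rewrite lad subrr scale0r addr0.
exists r, la^-1, mu; split => //.
  case=> k ek; apply: nv; exists ((k - mu * al) / (la * (1 - r))).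
  have lr : la * (1 - r) != 0 by rewrite mulf_neq0.
  apply: (@scalerI _ _ (la * (1 - r))) => //.
  rewrite scalerA (mulrC (la * _)) divfK //.
  transitivity (v + mu *: (al *: w - v) - mu *: (al *: w)); first by rewrite /mu; poly_ring.
  by rewrite ek; poly_ring.
by rewrite eV' addrAC subrr add0r scalerA mulVf // scale1r addrCA subrr addr0.
Qed.

Section AffineImage.

Variables (R : M -> M -> M -> Prop) (q : rat) (tau taui : M -> M).
Hypothesis q_neq0 : q != 0.
Hypothesis q_neq1 : q != 1.
Hypothesis R_table : forall x y, lin_indep2 x y -> R x y (x + q *: (y - x)).
Hypothesis R_on_line : forall x y z, x <> y -> R x y z -> on_line x y z.
Hypothesis tauK : cancel tau taui.
Hypothesis tauiK : cancel taui tau.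
Hypothesis tau_pres : preserves tau R.

Let tau_inj : injective tau := can_inj tauK.

Let tau_R a b c : R a b c -> R (tau a) (tau b) (tau c).
Proof. by move/tau_pres. Qed.

Let taui_R a b c : R a b c -> R (taui a) (taui b) (taui c).
Proof. by move=> h; apply/tau_pres; rewrite !tauiK. Qed.

Let tau_line := line_image q_neq0 q_neq1 R_table R_on_line tau_inj tau_R.
Let taui_line := line_image q_neq0 q_neq1 R_table R_on_line (can_inj tauiK) taui_R.

Lemma image_diag_side_coeff x y z t u : lin_indep3 x y z ->
  lin_indep2 (tau z) (tau x) -> lin_indep2 (tau y) (tau (x + y - z)) ->
  tau x + t *: (tau y - tau x) = tau z + u *: (tau (x + y - z) - tau z) ->
  u != 0 -> t = u.
Proof.
move=> H Izx Iyd E u0; apply/eqP/negPn/negP => tu.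
have ut : u - t != 0 by rewrite subr_eq0 eq_sym.
set X := tau x in Izx Iyd E *; set Y := tau y in Iyd E *;
set Z := tau z in Izx E *; set D := tau (x + y - z) in Iyd E *.
(* If [t <> u], the image lines [Z, X] and [Y, D] meet at [W]; so would their preimages. *)
pose W := Z + ((1 - t) / (u - t)) *: (X - Z).
have WYD : W = Y + (u / (u - t)) *: (D - Y).
  have hD : u *: D = X + t *: (Y - X) - Z + u *: Z by rewrite E; poly_ring.
  apply: (@scalerI _ _ (u - t)) => //.
  rewrite /W !scalerDr !scalerA !(mulrC (u - t)) !divfK // hD; poly_ring.
have := taui_line ((1 - t) / (u - t)) Izx; rewrite -/W /X /Z !tauK => Lzx.
have := taui_line (u / (u - t)) Iyd; rewrite -WYD /Y /D !tauK.
exact: lin_indep3_diag_side H Lzx.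
Qed.

Lemma image_parallelogram x y z : lin_indep3 x y z ->
  lin_indep2 (tau z) (tau x) -> lin_indep2 (tau z) (tau y) ->
  lin_indep2 (tau x) (tau (x + y - z)) -> lin_indep2 (tau y) (tau (x + y - z)) ->
  tau (x + y - z) = tau x + tau y - tau z.
Proof.
move=> H Izx Izy Ixd Iyd.
(* Both diagonals have midpoint [m]; its image splits both image diagonals in the same ratio. *)
set m := x + 2^-1 *: (y - x).
have em : z + 2^-1 *: (x + y - z - z) = m.
  by apply: (@scalerI _ _ 2) => //; rewrite scale2_midpoint scale2_midpoint; poly_ring.
have [t Ht] := tau_line 2^-1 (lin_indep3_12 H).
have [u Hu] := tau_line 2^-1 (lin_indep3_opposite H); rewrite em -/m in Hu.
have u0 : u != 0.
  apply/eqP => u0; move: Hu; rewrite u0 scale0r addr0 => /tau_inj mz.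
  have [/eqP] : [/\ 1 = 0 :> rat, 1 = 0 :> rat & -2 = 0 :> rat].
    by apply: H; rewrite -mz scaleNr /m scale2_midpoint !scale1r subrr.
  by rewrite oner_eq0.
have tu : t = u := image_diag_side_coeff H Izx Iyd (etrans (esym Ht) Hu) u0.
have tu' : 1 - t = u.
  apply: image_diag_side_coeff (lin_indep3_213 H) Izy _ _ u0; rewrite [y + x]addrC //.
  by rewrite -Hu Ht; poly_ring.
apply: (@scalerI _ _ u) => //.
transitivity (u *: (tau x + tau y - tau z) + (1 - u - u) *: (tau x - tau z)).
  transitivity (tau z + u *: (tau (x + y - z) - tau z) - tau z + u *: tau z); first by poly_ring.
  by rewrite -Hu Ht tu; poly_ring.
have -> : 1 - u - u = 0 by rewrite -{1}tu' tu; ring.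
by rewrite scale0r addr0.
Qed.

Lemma plane_image_in_span1 a b c w : lin_indep3 a b c ->
  in_span1 w (tau a) -> in_span1 w (tau b) -> in_span1 w (tau c) ->
  forall s t, in_span1 w (tau (plane_pt a b c s t)).
Proof.
move=> H Sa Sb Sc s t.
have [/andP[/eqP -> /eqP ->]|st] := boolP ((s == 0) && (t == 0)).
  by rewrite /plane_pt !scale0r !addr0.
(* [plane_pt a b c s t] is the midpoint of a point of [a, b] and a point of [a, c]. *)
have Su := in_span1_on_line Sa Sb (tau_line (2 * s) (lin_indep3_12 H)).
have Sw := in_span1_on_line Sa Sc (tau_line (2 * t) (lin_indep3_13 H)).
have Huw : lin_indep2 (plane_pt a b c (2 * s) 0) (plane_pt a b c 0 (2 * t)).
  apply: lin_indep2_plane_pts => //; move: st; rewrite negb_and.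
  by case/orP=> h; apply/orP; [left | right; rewrite eq_sym]; rewrite mulf_eq0 negb_or h.
have := tau_line 2^-1 Huw.
have -> : plane_pt a b c (2 * s) 0 + 2^-1 *: (plane_pt a b c 0 (2 * t)
    - plane_pt a b c (2 * s) 0) = plane_pt a b c s t.
  by apply: (@scalerI _ _ 2) => //; rewrite scale2_midpoint /plane_pt; poly_ring.
by apply: in_span1_on_line; rewrite /plane_pt scale0r addr0; [apply: Su | apply: Sw].
Qed.

Lemma plane_image_not_in_span1_neq0 a b c w : lin_indep3 a b c ->
  in_span1 w (tau a) -> in_span1 w (tau b) -> in_span1 w (tau c) ->
  tau a <> 0 -> tau b <> 0 -> tau c <> 0 -> False.
Proof.
move=> H Sa Sb Sc A0 B0 C0.
have [v nv] := exists_notin_span1 w.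
have H' : lin_indep3 (a - taui v) (b - taui v) (c - taui v).
  apply: lin_indep3_shift => // s t e; apply: nv.
  by rewrite -(tauiK v) e; apply: plane_image_in_span1.
have [ab ac _] := lin_indep3_neq H.
have [r [s [mu [r0 nV' eP]]]] :=
  exists_transversal nv Sa Sb Sc (fun e => ab (tau_inj e)) (fun e => ac (tau_inj e)).
set V' := v + mu *: (tau a - v) in nV' eP.
have L1 := taui_line mu (lin_indep2_span1 nv Sa A0); rewrite tauK -/V' in L1.
have L2 := taui_line r (lin_indep2_span1 nv Sc C0); rewrite tauK in L2.
have L3 := taui_line s (lin_indep2C (lin_indep2_span1 nV' Sb B0)); rewrite tauK -eP in L3.
move: (affine_indep_on_lines H' L1 L3 L2) => /(can_inj tauiK) /eqP.
rewrite addrC -subr_eq0 addrK scaler_eq0 (negbTE r0) subr_eq0 => /eqP eC.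
by apply: nv; rewrite -eC.
Qed.

Lemma plane_image_not_in_span1 a b c w : lin_indep3 a b c ->
  in_span1 w (tau a) -> in_span1 w (tau b) -> in_span1 w (tau c) -> False.
Proof.
(* At most one vertex is sent to [0]; if it is [z], trade it for the fourth vertex [x + y - z]. *)
have key x y z : lin_indep3 x y z -> in_span1 w (tau x) -> in_span1 w (tau y) ->
    in_span1 w (tau z) -> tau x <> 0 -> tau y <> 0 -> False.
  move=> H Sx Sy Sz X0 Y0; have [Z0|/eqP Z0] := eqVneq (tau z) 0; last first.
    exact: plane_image_not_in_span1_neq0 H Sx Sy Sz X0 Y0 Z0.
  have H' := lin_indep3_fourth_vertex H.
  have Sd : in_span1 w (tau (x + y - z)).
    have := plane_image_in_span1 H Sx Sy Sz 1 (-1).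
    by rewrite /plane_pt; congr (in_span1 _ (tau _)); poly_ring.
  apply: plane_image_not_in_span1_neq0 H' Sx Sy Sd X0 Y0 _.
  rewrite -Z0 => /tau_inj dz; have [_ _ /eqP] : [/\ 1 = 0 :> rat, 1 = 0 :> rat & -2 = 0 :> rat].
    by apply: H; transitivity (x + y - z - z); [poly_ring | rewrite dz subrr].
  by rewrite oppr_eq0 pnatr_eq0.
move=> H Sa Sb Sc; have nz u u' : tau u = 0 -> u' <> u -> tau u' <> 0.
  by move=> tu uu tu'; apply: uu; apply: tau_inj; rewrite tu tu'.
have [ab ac bc] := lin_indep3_neq H.
have [A0|/eqP A0] := eqVneq (tau a) 0.
  apply: (key b c a) (lin_indep3_312 (lin_indep3_312 H)) _ _ _ (nz _ _ A0 _) (nz _ _ A0 _) => //.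
  - by move/esym.
  - by move/esym.
have [B0|/eqP B0] := eqVneq (tau b) 0.
  apply: (key c a b) (lin_indep3_312 H) _ _ _ (nz _ _ B0 _) A0 => //.
  by move/esym.
exact: key H Sa Sb Sc A0 _.
Qed.

Lemma eventually_image_lin_indep2 f (h : nat -> M) : tau f <> 0 ->
  (forall i j, i <> j -> lin_indep3 f (h i) (h j)) ->
  eventually (fun i => lin_indep2 (tau f) (tau (h i))).
Proof.
move=> F0 Hh.
have [|N hN] := eventually_not_unique (B := fun i => ~ lin_indep2 (tau f) (tau (h i))).
  move=> i j Di Dj; apply: NNPP => /Hh Hf; apply: plane_image_not_in_span1 Hf _ _ _.
  - by exists 1; rewrite scale1r.
  - exact: in_span1_not_lin_indep2.
  - exact: in_span1_not_lin_indep2.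
by exists N => i /hN /NNPP.
Qed.

Lemma image_parallelogram_indep a b c : lin_indep2 a b -> lin_indep2 (a + b) c ->
  c != 0 -> a + b - c != 0 ->
  tau a <> 0 -> tau b <> 0 -> tau c <> 0 -> tau (a + b - c) <> 0 ->
  tau (a + b - c) = tau a + tau b - tau c.
Proof.
move=> Hab Habc c0 d0 A0 B0 C0 D0.
have a0 : a != 0 by apply/eqP; apply: lin_indep2_neq0 Hab.
have b0 : b != 0 by apply/eqP; apply: lin_indep2_neq0 (lin_indep2C Hab).
set N := (size a + size b + size c)%N.
have [ha hb hc] : [/\ size a <= N, size b <= N & size c <= N]%N by rewrite /N; split; lia.
have hab : (size (a + b)%R <= N)%N.
  by apply: leq_trans (size_polyD a b) _; rewrite geq_max ha hb.
have hd : (size (a + b - c)%R <= N)%N.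
  by apply: leq_trans (size_polyD _ _) _; rewrite size_polyN geq_max hab hc.
(* Pass through the fresh vertices [e = X^(N+i)] and [g = a + b - e]. *)
have ev (f : M) : f != 0 -> (size f <= N)%N -> tau f <> 0 -> eventually (fun i =>
    lin_indep2 (tau f) (tau (0 + 1 *: 'X^(N + i))) /\
    lin_indep2 (tau f) (tau (a + b + (-1) *: 'X^(N + i)))).
  move=> f0 hf F0; apply: eventually_and; apply: eventually_image_lin_indep2 => // i j /eqP ij;
    apply: lin_indep3_fresh => //; by rewrite ?size_poly0 ?oppr_eq0 ?oner_eq0.
have [i /(_ i (leqnn i))] := eventually_and (eventually_and (ev a a0 ha A0) (ev b b0 hb B0))
  (eventually_and (ev c c0 hc C0) (ev _ d0 hd D0)).
rewrite add0r scale1r scaleN1r.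
set e := 'X^(N + i); set g := a + b - e.
move=> [[[Iae Iag] [Ibe Ibg]] [[Ice Icg] [Ide Idg]]].
have tau_g : tau (a + b - e) = tau a + tau b - tau e.
  apply: image_parallelogram (lin_indep2C Iae) (lin_indep2C Ibe) Iag Ibg.
  by apply: lin_indep3_addX => //; lia.
have eg : g + e - c = a + b - c by rewrite /g; poly_ring.
rewrite -eg image_parallelogram ?eg.
- by rewrite tau_g; poly_ring.
- by apply: lin_indep3_subX => //; lia.
- exact: Icg.
- exact: Ice.
- exact: lin_indep2C Idg.
- exact: lin_indep2C Ide.
Qed.

Definition regular x := x != 0 /\ tau x <> 0.

Lemma image_parallelogram_regular a b c :
  regular a -> regular b -> regular c -> regular (a + b - c) ->
  tau (a + b - c) = tau a + tau b - tau c.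
Proof.
move=> [a0 A0] [b0 B0] [c0 C0] [d0 D0].
set N := (size a + size b + size c)%N.
(* Go through the fresh vector [h = X^(N+i)] and the vertex [a + h - c]. *)
have ev_h : eventually (fun i => tau 'X^(N + i) <> 0).
  apply: eventually_not_unique => i j hi hj.
  by apply/(@addnI N)/expX_inj/tau_inj; rewrite hi hj.
have ev_k : eventually (fun i => tau (a + 'X^(N + i) - c) <> 0).
  apply: eventually_not_unique => i j hi hj.
  by apply/(@addnI N)/expX_inj/(addrI a)/(subIr c)/tau_inj; rewrite hi hj.
have [i /(_ i (leqnn i)) [H0 H1]] := eventually_and ev_h ev_k.
set n := (N + i)%N in H0 H1; set h : M := 'X^n in H0 H1.
have [ha hb hc] : [/\ size a <= n, size b <= n & size c <= n]%N by rewrite /n /N; split; lia.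
have hac : (size (a - c)%R <= n)%N.
  by apply: leq_trans (size_polyD _ _) _; rewrite size_polyN geq_max ha hc.
have hd : (size (a + b - c)%R <= n)%N.
  apply: leq_trans (size_polyD _ _) _; rewrite size_polyN geq_max hc andbT.
  by apply: leq_trans (size_polyD _ _) _; rewrite geq_max ha hb.
have e1 : a + h - c = (a - c) + h by rewrite /h; poly_ring.
have e2 : a + h - c + b - h = a + b - c by rewrite /h; poly_ring.
have h0 : h != 0 by have := @addX_neq0 0 n; rewrite add0r size_poly0; apply.
have tau_k : tau (a + h - c) = tau a + tau h - tau c.
  apply: image_parallelogram_indep => //.
  - by apply: lin_indep2C; have := @lin_indep2_addX 0 a n; rewrite add0r size_poly0; apply.
  - exact: lin_indep2_addX.
  - by rewrite e1 addX_neq0.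
have := @image_parallelogram_indep (a + h - c) b h; rewrite e2 tau_k => -> //.
- by poly_ring.
- by rewrite e1; apply: lin_indep2_addX.
- have -> : a + h - c + b = (a + b - c) + h by rewrite /h; poly_ring.
  exact: lin_indep2_addX_X.
- by rewrite -tau_k.
Qed.

Let o := taui 0.

Lemma regular_of_size (x : M) : (size o < size x)%N -> regular x.
Proof.
move=> h; split; first by apply: contraTneq h => ->; rewrite size_poly0.
by move=> e; move: h; rewrite /o -e tauK ltnn.
Qed.

(* The difference [tau (g + x) - tau g] does not depend on the regular base point [g];
   we read it off at a base point of large degree. *)
Definition linear_part (x : M) : M := let g := 'X^(size x + size o) in tau (g + x) - tau g.

Lemma linear_part_diff (y x : M) : regular y -> regular (y + x) ->
  tau (y + x) - tau y = linear_part x.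
Proof.
move=> ry ryx; rewrite /linear_part; set g : M := 'X^_.
have sg : size g = (size x + size o).+1 by rewrite size_polyXn.
have rg : regular g by apply: regular_of_size; rewrite sg; lia.
have rgx : regular (g + x) by apply: regular_of_size; rewrite size_polyDl sg; lia.
have e : y + x + g - y = g + x by poly_ring.
have := image_parallelogram_regular ryx rg ry; rewrite e => /(_ rgx) ->; poly_ring.
Qed.

Lemma linear_partD (x1 x2 : M) : linear_part (x1 + x2) = linear_part x1 + linear_part x2.
Proof.
set y : M := 'X^(size x1 + size x2 + size o).
have sy : size y = (size x1 + size x2 + size o).+1 by rewrite size_polyXn.
have ry : regular y by apply: regular_of_size; rewrite sy; lia.
have ry2 : regular (y + x2) by apply: regular_of_size; rewrite size_polyDl sy; lia.
have ry21 : regular (y + x2 + x1).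
  by apply: regular_of_size; rewrite !size_polyDl ?sy; lia.
have e : y + (x1 + x2) = y + x2 + x1 by poly_ring.
have ry12 : regular (y + (x1 + x2)) by rewrite e.
rewrite -(linear_part_diff ry ry12) -(linear_part_diff ry2 ry21).
by rewrite -(linear_part_diff ry ry2) e; poly_ring.
Qed.

Lemma linear_part_linear (a : rat) (x y : M) :
  linear_part (a *: x + y) = a *: linear_part x + linear_part y.
Proof. exact: (additive_linear linear_partD). Qed.

Lemma linear_partB (x y : M) : linear_part (y - x) = linear_part y - linear_part x.
Proof. by rewrite -scaleN1r addrC linear_part_linear scaleN1r addrC. Qed.

Lemma linear_part_line (x y : M) t :
  linear_part (x + t *: (y - x)) = linear_part x + t *: (linear_part y - linear_part x).
Proof. by rewrite addrC linear_part_linear linear_partB addrC. Qed.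

Lemma linear_part_eq0 (x : M) : linear_part x = 0 -> x = 0.
Proof.
move/eqP; rewrite subr_eq0 => /eqP /tau_inj /eqP.
by rewrite -subr_eq0 addrAC subrr add0r => /eqP.
Qed.

Let e0 : M := 'X^(size o).

Definition translation_part := tau e0 - linear_part e0.

Lemma image_affine_regular (z : M) : regular z -> tau z = linear_part z + translation_part.
Proof.
have re0 : regular e0 by apply: regular_of_size; rewrite size_polyXn.
move=> rz; have ez : e0 + (z - e0) = z by rewrite addrC subrK.
have := linear_part_diff (x := z - e0) re0; rewrite ez linear_partB => /(_ rz) h.
by rewrite -[tau z](subrK (tau e0)) h /translation_part; poly_ring.
Qed.

Lemma image_affine_zero_preimage : o != 0 -> tau o = linear_part o + translation_part.
Proof.
move=> o0; have [k hk] : {k | (size o <= k)%N} by exists (size o).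
set u := 'X^k + o; set w := 2 *: 'X^k + o.
have [reg_u reg_w] : regular u /\ regular w.
  by split; apply: regular_of_size; rewrite size_polyDl ?size_scale ?size_polyXn.
have Iuw : lin_indep2 u w.
  move=> al be E; have := congr1 (fun p : M => p`_k) E.
  rewrite /u /w !coefE eqxx !(nth_default 0 hk) !addr0 !mulr1 => ck.
  have /eqP : (al + be) *: o = 0.
    transitivity (al *: u + be *: w - (al + be * 2) *: 'X^k); first by rewrite /u /w; poly_ring.
    by rewrite E ck scale0r subr0.
  by rewrite scaler_eq0 (negbTE o0) orbF => /eqP ab; split; lra.
(* [o] lies on the line [u, w]; as [u] and [w] are regular, the image of that line
   is also its image under the affine map. *)
have [c hc] := tau_line (-1) Iuw.
have ou : u + (-1) *: (w - u) = o by rewrite /u /w; poly_ring.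
rewrite ou (image_affine_regular reg_u) (image_affine_regular reg_w) in hc.
set P := u + c *: (w - u).
have hP : linear_part P + translation_part = tau o.
  by rewrite hc /P linear_part_line; poly_ring.
suff Po : P = o by rewrite -hP Po.
apply: tau_inj; have [tP0|/eqP tP0] := eqVneq (tau P) 0; first by rewrite tP0 /o tauiK.
by rewrite -hP image_affine_regular //; split => //; apply: line_pt_neq0.
Qed.

Lemma image_affine (x : M) : tau x = linear_part x + translation_part.
Proof.
have neq0 z : z != 0 -> tau z = linear_part z + translation_part.
  move=> z0; have [tz|/eqP tz] := eqVneq (tau z) 0; last exact: image_affine_regular.
  have zo : z = o by rewrite /o -tz tauK.
  by rewrite zo image_affine_zero_preimage // -zo.
have [->|/neq0 //] := eqVneq x 0.
have lp0 : linear_part 0 = 0 by rewrite -[X in linear_part X](subrr 0) linear_partB subrr.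
(* The preimage of [translation_part] can only be [0]. *)
rewrite lp0 add0r; have [w0|w0] := eqVneq (taui translation_part) 0.
  by rewrite -w0 tauiK.
have := neq0 _ w0; rewrite tauiK -{1}[translation_part]add0r => /addIr /esym.
by move/linear_part_eq0/eqP; rewrite (negbTE w0).
Qed.

Lemma linear_part_bij : bijective linear_part.
Proof.
exists (fun y => taui (y + translation_part)) => [x | y].
  by rewrite -image_affine tauK.
by apply: (@addIr _ translation_part); rewrite -image_affine tauiK.
Qed.

End AffineImage.

Theorem lemma1 (R : M -> M -> M -> Prop) (sigma : M -> M) :
  affine_rel R -> bijective sigma -> preserves sigma R -> in_AGL sigma.
Proof.
case=> _ [[[|[p q] T] [_ [HT Htab]]] [R_on_line _]] // [sigmai sK sKi] Hpres.
have [/= p0 q0 pq1] := Htab (p, q) (mem_head _ _).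
have q1 : q != 1 by apply: contraNneq p0 => q1; apply/eqP; lra.
have R_table x y : lin_indep2 x y -> R x y (x + q *: (y - x)).
  move=> xy; apply/(HT x y xy); exists (p, q); first exact: mem_head.
  have -> : p = 1 - q by rewrite -pq1 addrK.
  by rewrite /=; poly_ring.
exists (linear_part sigma sigmai), (translation_part sigma sigmai); split; last split.
- exact: linear_part_linear q0 q1 R_table R_on_line sK sKi Hpres.
- exact: linear_part_bij q0 q1 R_table R_on_line sK sKi Hpres.
- exact: image_affine q0 q1 R_table R_on_line sK sKi Hpres.
Qed.
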